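(* Let $k_1,k_2\in\frac12\mathbb Z$, let $B_1,B_2$ be positive definite symmetric bilinear forms on a real vector space $V$, and let $L$ be a lattice in $V$ which is integral for both $B_1$ and $B_2$. Let $G\le\mathrm{SL}_2(\mathbb Z)$ have finite index, and for $i=1,2$ let $\chi_i$ be a linear character of $\widetilde G\ltimes H((L,B_i),1)$ with finite-index kernel and $\chi_i(([0,0],\xi))=\xi$. Let $f_1,f_2:\mathbb H\times\mathcal V\to\mathbb C$. Then: (1) the map $\chi_1*\chi_2:\widetilde G\ltimes H((L,B_1+B_2),1)\to\mathbb C^\times$, $(\gamma,\varepsilon\sqrt{c\tau+d},[v,w],\xi)\mapsto\xi\,\chi_1(\gamma,\varepsilon\sqrt{c\tau+d},[v,w],1)\,\chi_2(\gamma,\varepsilon\sqrt{c\tau+d},[v,w],1)$ is a linear character; (2) if $f_i\in J_{k_i,(L,B_i)}(G,\chi_i)$ for $i=1,2$, then $f_1f_2\in J_{k_1+k_2,(L,B_1+B_2)}(G,\chi_1*\chi_2)$; moreover if one of $f_1,f_2$ is a Jacobi cusp form, so is $f_1f_2$.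
   Context: $e(x)=\exp(2\pi ix)$, $q^n=e(n\tau)$, $\tau\in\mathbb H$, $\mathcal V=V\oplus iV$. For a form $B'$ on $V$ (extended $\mathbb C$-bilinearly) with $Q'(v)=\frac12B'(v,v)$, integral on $L$ ($B'(L,L)\subseteq\mathbb Z$), dual lattice $L'^\sharp=\{v:B'(v,L)\subseteq\mathbb Z\}$: the metaplectic group consists of pairs $(\gamma,\varepsilon\sqrt{c\tau+d})$, $\gamma=\begin{pmatrix}a&b\\c&d\end{pmatrix}$, $\varepsilon=\pm1$, principal branch, product $(\gamma_1,\phi_1)(\gamma_2,\phi_2)=(\gamma_1\gamma_2,\phi_1(\gamma_2\tau)\phi_2(\tau))$; $\widetilde G$ is the preimage of $G$. $H((L,B'),1)$ consists of $([v,w],\xi)$, $v,w\in L$, $\xi=\pm1$, product $([v_1,w_1],\xi_1)([v_2,w_2],\xi_2)=([v_1+v_2,w_1+w_2],\xi_1\xi_2e^{\pi i(B'(v_1,w_2)-B'(v_2,w_1))})$; the semidirect product uses the right action $[v,w]\gamma=[av+cw,bv+dw]$ (elements $(\gamma,\varepsilon\sqrt{c\tau+d},[v,w],\xi)$ being products $\gamma\cdot([v,w],\xi)$). Slash: $(f|_{k,B'}g)(\tau,z)=(\varepsilon\sqrt{c\tau+d})^{-2k}\xi\,e(-\frac{cQ'(z+\tau v+w)}{c\tau+d}+\tau Q'(v)+B'(v,z)+\frac12B'(v,w))f(\frac{a\tau+b}{c\tau+d},\frac{z+\tau v+w}{c\tau+d})$. $J_{k,(L,B')}(G,\chi)$ is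 the space of holomorphic $f$ with $f|_{k,B'}g=\chi(g)f$ for $g\in\widetilde G\ltimes H((L,B'),1)$ such that for each $g\in\widetilde{\mathrm{SL}_2(\mathbb Z)}\ltimes H((L,B'),1)$ the (normally convergent) expansion $f|_{k,B'}g=\sum c(n,t)q^ne(B'(t,z))$ satisfies $c(n,t)=0$ unless $n\ge Q'(t)$; $f$ is a Jacobi cusp form if moreover $c(n,t)=0$ unless $n>Q'(t)$. *)

From HB Require Import structures.
From mathcomp Require Import all_boot all_order all_algebra.
From mathcomp Require Import all_classical all_reals all_analysis.
From mathcomp Require Import complex.
Import Order.TTheory GRing.Theory Num.Theory.
Import numFieldNormedType.Exports.

Set Implicit Arguments.
Unset Strict Implicit.
Unset Printing Implicit Defensive.

Local Open Scope ring_scope.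

Section Jacobi.
Variable R : realType.
Variable n : nat.

Local Notation C := (R[i]).

(** the domain C x C^n (tau, z) as a normed C-module; H x V-cal is the part
    with Im tau > 0 *)
Definition CV : normedModType C := ((C^o) * 'rV[C]_n)%type.

Definition toC (x : R) : C := Complex x 0.
Definition cre (z : C) : R := complex.Re z.
Definition cim (z : C) : R := complex.Im z.
Definition cabs (z : C) : R := Num.sqrt (cre z ^+ 2 + cim z ^+ 2).
Definition ci : C := Complex 0 1.

Definition cexp (z : C) : C :=
  toC (expR (cre z)) * Complex (cos (cim z)) (sin (cim z)).
Definition ee (z : C) : C := cexp (ci * toC (2 * pi) * z).

(** principal branch of the square root (argument in (-pi/2, pi/2]) *)
Definition psqrt (z : C) : C :=
  Complex (Num.sqrt ((cabs z + cre z) / 2))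
          ((if cim z < 0 then -1 else 1) * Num.sqrt ((cabs z - cre z) / 2)).

(** real vectors, the lattice L = Z-span of the rows of an invertible basis
    matrix Bs, bilinear forms given by matrices *)
Definition cv (v : 'rV[R]_n) : 'rV[C]_n := map_mx toC v.
Definition inL (Bs : 'M[R]_n) (v : 'rV[R]_n) : Prop :=
  exists x : 'rV[int]_n, v = map_mx (fun m : int => m%:~R) x *m Bs.
Definition Bil (S : 'M[R]_n) (v w : 'rV[R]_n) : R := (v *m S *m w^T) 0 0.
Definition Qr (S : 'M[R]_n) (v : 'rV[R]_n) : R := Bil S v v / 2.
(** C-bilinear extension B' and Q' on V-cal = V + iV *)
Definition BilC (S : 'M[R]_n) (z w : 'rV[C]_n) : C := (z *m map_mx toC S *m w^T) 0 0.
Definition QC (S : 'M[R]_n) (z : 'rV[C]_n) : C := BilC S z z / 2.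

Definition sym_posdef (S : 'M[R]_n) : Prop :=
  S^T = S /\ forall v : 'rV[R]_n, v != 0 -> 0 < Bil S v v.
Definition integral_on (S Bs : 'M[R]_n) : Prop :=
  forall v w, inL Bs v -> inL Bs w -> exists m : int, Bil S v w = m%:~R.

Definition i0 : 'I_2 := ord0.
Definition i1 : 'I_2 := ord_max.
Definition ma (g : 'M[int]_2) := g i0 i0.
Definition mb (g : 'M[int]_2) := g i0 i1.
Definition mc (g : 'M[int]_2) := g i1 i0.
Definition md (g : 'M[int]_2) := g i1 i1.
Definition inSL2 (g : 'M[int]_2) : Prop := \det g = 1.
Definition mob (g : 'M[int]_2) (t : C) : C :=
  ((ma g)%:~R * t + (mb g)%:~R) / ((mc g)%:~R * t + (md g)%:~R).

(** finite-index subgroup G of SL_2(Z) (inverse of g in SL_2(Z) is \adj g) *)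
Definition fi_subgroup (G : 'M[int]_2 -> Prop) : Prop :=
  [/\ forall g, G g -> inSL2 g,
      G 1%:M,
      forall g h, G g -> G h -> G (g *m h),
      forall g, G g -> G (\adj g)
    & exists (m : nat) (h : 'I_m -> 'M[int]_2),
        forall g, inSL2 g -> exists i, G (\adj (h i) *m g)].

(** elements (gamma, eps sqrt(c tau + d), [v,w], xi) of Mp_2 |x H((L,B),1) *)
Record jelt := JE { el_g : 'M[int]_2; el_eps : C; el_v : 'rV[R]_n;
                    el_w : 'rV[R]_n; el_xi : C }.

Definition pm1 (x : C) : Prop := x = 1 \/ x = -1.

Definition in_grp (G : 'M[int]_2 -> Prop) (Bs : 'M[R]_n) (x : jelt) : Prop :=
  [/\ G (el_g x) /\ inSL2 (el_g x), pm1 (el_eps x), inL Bs (el_v x),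
      inL Bs (el_w x) & pm1 (el_xi x)].

Definition mpf (g : 'M[int]_2) (eps : C) (t : C) : C :=
  eps * psqrt ((mc g)%:~R * t + (md g)%:~R).

(** metaplectic product: (g1,phi1)(g2,phi2) = (g1 g2, phi1(g2 tau) phi2(tau));
    the sign of the product is read off at tau = i *)
Definition mp_eps (g1 : 'M[int]_2) (e1 : C) (g2 : 'M[int]_2) (e2 : C) : C :=
  mpf g1 e1 (mob g2 ci) * mpf g2 e2 ci / mpf (g1 *m g2) 1 ci.

Definition actv (v w : 'rV[R]_n) (g : 'M[int]_2) : 'rV[R]_n :=
  (ma g)%:~R *: v + (mc g)%:~R *: w.
Definition actw (v w : 'rV[R]_n) (g : 'M[int]_2) : 'rV[R]_n :=
  (mb g)%:~R *: v + (md g)%:~R *: w.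

(** product in Mp_2 |x H((L,B),1), B given by S:
    (g1 h1)(g2 h2) = (g1 g2) ((h1 g2) h2) *)
Definition jmul (S : 'M[R]_n) (x y : jelt) : jelt :=
  let v1 := actv (el_v x) (el_w x) (el_g y) in
  let w1 := actw (el_v x) (el_w x) (el_g y) in
  JE (el_g x *m el_g y) (mp_eps (el_g x) (el_eps x) (el_g y) (el_eps y))
     (v1 + el_v y) (w1 + el_w y)
     (el_xi x * el_xi y *
        cexp (toC pi * ci * toC (Bil S v1 (el_w y) - Bil S (el_v y) w1))).

Definition is_lin_char (S Bs : 'M[R]_n) (G : 'M[int]_2 -> Prop) (chi : jelt -> C) : Prop :=
  (forall x, in_grp G Bs x -> chi x != 0) /\
  (forall x y, in_grp G Bs x -> in_grp G Bs y -> chi (jmul S x y) = chi x * chi y).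

Definition fi_kernel (S Bs : 'M[R]_n) (G : 'M[int]_2 -> Prop) (chi : jelt -> C) : Prop :=
  exists (m : nat) (h : 'I_m -> jelt), (forall i, in_grp G Bs (h i)) /\
    forall x, in_grp G Bs x ->
      exists i k, [/\ in_grp G Bs k, chi k = 1 & x = jmul S (h i) k].

Definition center_cond (chi : jelt -> C) : Prop :=
  forall xi, pm1 xi -> chi (JE 1%:M 1 0 0 xi) = xi.

Definition chi_star (chi1 chi2 : jelt -> C) (x : jelt) : C :=
  el_xi x * chi1 (JE (el_g x) (el_eps x) (el_v x) (el_w x) 1)
          * chi2 (JE (el_g x) (el_eps x) (el_v x) (el_w x) 1).

(** slash operator f |_{k,B} g, with the weight k = k2 / 2, k2 : int *)
Definition slash (k2 : int) (S : 'M[R]_n) (f : CV -> C) (x : jelt) (p : CV) : C :=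
  let g := el_g x in
  let t : C := p.1 in
  let z : 'rV[C]_n := p.2 in
  let j : C := (mc g)%:~R * t + (md g)%:~R in
  let v := cv (el_v x) in
  let w := cv (el_w x) in
  let u := z + t *: v + w in
  (mpf g (el_eps x) t) ^ (- k2) * el_xi x *
  ee (- ((mc g)%:~R * QC S u / j) + t * QC S v + BilC S v z + BilC S v w / 2) *
  f (mob g t, j^-1 *: u).

Definition Hdom (p : CV) : Prop := 0 < cim p.1.

Definition holo (f : CV -> C) : Prop :=
  forall p, Hdom p -> differentiable (f : CV -> C^o) p.

(** F has a normally convergent expansion
      F(tau,z) = sum c(n,t) q^n e(B'(t,z))
    (indexed by a countable family of exponents (n_k, t_k)) whose
    coefficients satisfy c(n,t) = 0 unless P n t *)
Definition has_expansion (S : 'M[R]_n) (F : CV -> C) (P : R -> 'rV[R]_n -> Prop) : Prop :=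
  exists (c : nat -> C) (nn : nat -> R) (tt : nat -> 'rV[R]_n),
    let term k (p : CV) := c k * ee (toC (nn k) * p.1 + BilC S (cv (tt k)) p.2) in
    [/\ forall k, c k != 0 -> P (nn k) (tt k),
        (* normal convergence on compact subsets of H x V-cal *)
        forall K : set CV, compact K -> (forall p, K p -> Hdom p) ->
          exists M : nat -> R,
            (forall k p, K p -> cabs (term k p) <= M k) /\
            exists Mb : R, forall N, \sum_(k < N) M k <= Mb
      &
        forall p, Hdom p -> forall e : R, 0 < e -> exists N0 : nat,
          forall N, (N0 <= N)%N -> cabs (F p - \sum_(k < N) term k p) < e].

Definition jacobi_form (k2 : int) (S Bs : 'M[R]_n) (G : 'M[int]_2 -> Prop)
    (chi : jelt -> C) (f : CV -> C) : Prop :=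
  [/\ holo f,
      forall x, in_grp G Bs x -> forall p, Hdom p -> slash k2 S f x p = chi x * f p
    & forall x, in_grp inSL2 Bs x ->
        has_expansion S (slash k2 S f x) (fun m t => Qr S t <= m)].

Definition jacobi_cusp_form (k2 : int) (S Bs : 'M[R]_n) (G : 'M[int]_2 -> Prop)
    (chi : jelt -> C) (f : CV -> C) : Prop :=
  [/\ holo f,
      forall x, in_grp G Bs x -> forall p, Hdom p -> slash k2 S f x p = chi x * f p
    & forall x, in_grp inSL2 Bs x ->
        has_expansion S (slash k2 S f x) (fun m t => Qr S t < m)].

End Jacobi.

From HB Require Import structures.
From mathcomp Require Import all_boot all_order all_algebra.
From mathcomp Require Import all_classical all_reals all_analysis.
From mathcomp Require Import complex.
From mathcomp Require Import zify ring lra.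
From Stdlib Require PeanoNat.
Import Order.TTheory GRing.Theory Num.Theory.
Import numFieldNormedType.Exports.

Set Implicit Arguments.
Unset Strict Implicit.
Unset Printing Implicit Defensive.

Local Open Scope classical_set_scope.
Local Open Scope ring_scope.

(* With xi reset to 1, each chi_i is multiplicative up to the central factor
   e^{pi i (B_i(v1', w2) - B_i(v2, w1'))} of the Heisenberg product law; this
   factor is +-1 because L is B_i-integral, and the factor for B1 + B2 is the
   product of those for B1 and B2, so in chi1 * chi2 they combine into squares.
   The slash operator is multiplicative: the exponent of its automorphy factor is
   additive in the form and the weights add, so (f1 f2)|g = xi (f1|g')(f2|g')
   with g' = g with xi reset to 1.  Finally, the Cauchy product of the two
   normally convergent expansions, enumerated along squares, is again such an
   expansion, with exponents (n1 + n2, t) where B(t, .) = B1(t1, .) + B2(t2, .);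
   then Q(t) <= Q1(t1) + Q2(t2), which propagates the (strict) support condition. *)

Section ComplexModulus.
Variable R : realType.
Implicit Types z w : R[i].

Lemma cabs_normc z : cabs z = `|z : Rcomplex R|.
Proof. by case: z. Qed.

Lemma cabs_ge0 z : 0 <= cabs z.
Proof. by rewrite cabs_normc. Qed.

Lemma cabsM z w : cabs (z * w) = cabs z * cabs w.
Proof. by rewrite !cabs_normc; exact: Normc.normcM. Qed.

Lemma cabsD z w : cabs (z + w) <= cabs z + cabs w.
Proof. by rewrite !cabs_normc; exact: ler_normD. Qed.

Lemma cabsN z : cabs (- z) = cabs z.
Proof. by rewrite !cabs_normc; exact: normrN. Qed.

Lemma cabs_sum (I : Type) (r : seq I) (F : I -> R[i]) :
  cabs (\sum_(i <- r) F i) <= \sum_(i <- r) cabs (F i).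
Proof.
rewrite cabs_normc; under [X in _ <= X]eq_bigr do rewrite cabs_normc.
exact: (ler_norm_sum (V := Rcomplex R)).
Qed.

Lemma cabs_eq0 z : (cabs z == 0) = (z == 0).
Proof. by rewrite cabs_normc normr_eq0. Qed.

Lemma cabs_pm1 z : pm1 z -> cabs z = 1.
Proof. by case=> ->; rewrite ?cabsN cabs_normc; exact: Normc.normc1. Qed.

End ComplexModulus.

Section ComplexExponential.
Variable R : realType.
Implicit Types (x : R) (z w : R[i]).

Lemma toCE : @toC R = real_complex R.
Proof. by []. Qed.

Lemma toCD x y : toC (x + y) = toC x + toC y.
Proof. by rewrite toCE rmorphD. Qed.

Lemma cexpD z w : cexp (z + w) = cexp z * cexp w.
Proof.
case: z w => [a b] [c d]; rewrite /cexp /toC /cre /cim /=.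
by simpc; rewrite expRD cosD sinD; congr Complex; ring.
Qed.

Lemma cexp0 : cexp (0 : R[i]) = 1.
Proof. by rewrite /cexp /cre /cim /toC /= expR0 cos0 sin0; simpc. Qed.

Lemma eeD z w : ee (z + w) = ee z * ee w.
Proof. by rewrite /ee mulrDr cexpD. Qed.

End ComplexExponential.

(* The indices in [Q^2, (Q+1)^2) enumerate the pairs with max i j = Q, so the
   first Q^2 indices enumerate [0, Q)^2. *)
Definition square_enum (k : nat) : nat * nat :=
  let Q := Nat.sqrt k in let r := (k - Q * Q)%N in
  if (r <= Q)%N then (Q, r) else ((r - Q.+1)%N, Q).

Lemma sqrt_square_add Q r : (r <= Q + Q)%N -> Nat.sqrt (Q * Q + r) = Q.
Proof. by move=> h; apply: PeanoNat.Nat.sqrt_unique; split; lia. Qed.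

Lemma square_enum_row Q r : (r <= Q)%N -> square_enum (Q * Q + r) = (Q, r).
Proof.
move=> h; rewrite /square_enum sqrt_square_add; last lia.
have -> : (Q * Q + r - Q * Q = r)%N by lia.
by rewrite h.
Qed.

Lemma square_enum_col Q r : (r < Q)%N -> square_enum (Q * Q + Q.+1 + r) = (r, Q).
Proof.
move=> h; rewrite /square_enum -addnA sqrt_square_add; last lia.
have -> : (Q * Q + (Q.+1 + r) - Q * Q = Q.+1 + r)%N by lia.
have -> : (Q.+1 + r <= Q)%N = false by lia.
congr (_, _); lia.
Qed.

Lemma sum_square_enum {V : nmodType} (f : nat * nat -> V) Q :
  \sum_(0 <= k < Q * Q) f (square_enum k) = \sum_(0 <= i < Q) \sum_(0 <= j < Q) f (i, j).
Proof.
elim: Q => [|Q IH]; first by rewrite !big_geq.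
have -> : (Q.+1 * Q.+1 = Q * Q + Q.+1 + Q)%N by lia.
rewrite (@big_cat_nat _ _ _ (Q * Q + Q.+1)) /=; [|lia|lia].
rewrite (@big_cat_nat _ _ _ (Q * Q)) /=; [|lia|lia].
rewrite IH -{1}[(Q * Q)%N]add0n -{2}[(Q * Q + Q.+1)%N]add0n !big_addn.
have -> : (Q * Q + Q.+1 - Q * Q = Q.+1)%N by lia.
have -> : (Q * Q + Q.+1 + Q - (Q * Q + Q.+1) = Q)%N by lia.
under eq_big_nat => i /andP[_ hi] do rewrite addnC square_enum_row //.
under [X in _ + X]eq_big_nat => i /andP[_ hi] do rewrite addnC square_enum_col //.
rewrite [RHS]big_nat_recr //=.
under [X in _ = X + _]eq_bigr do rewrite big_nat_recr //=.
by rewrite big_split /= addrAC.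
Qed.

Lemma sum_square_enumM {T : pzSemiRingType} (a b : nat -> T) Q :
  \sum_(0 <= k < Q * Q) a (square_enum k).1 * b (square_enum k).2 =
  (\sum_(0 <= i < Q) a i) * (\sum_(0 <= j < Q) b j).
Proof.
rewrite (sum_square_enum (fun ij => a ij.1 * b ij.2)) big_distrl /=.
by apply: eq_bigr => i _; rewrite big_distrr.
Qed.

Section SeriesProduct.
Variable R : realType.
Implicit Types (a b : nat -> R[i]) (A B : R[i]).

Definition series_to a A : Prop :=
  forall e : R, 0 < e -> exists N0, forall N, (N0 <= N)%N ->
    cabs (A - \sum_(k < N) a k) < e.

Lemma nondecreasing_bounded_cauchy (T : nat -> R) (M : R) :
  {homo T : m N / (m <= N)%N >-> m <= N} -> (forall N, T N <= M) ->
  forall e, 0 < e -> exists N1, forall m N, (N1 <= m)%N -> (m <= N)%N -> T N - T m < e.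
Proof.
move=> T_nd T_ub e e0.
have T_cvg : T @ \oo --> sup (range T).
  by apply: nondecreasing_cvgn => //; exists M => _ [N _ <-].
have [N1 _ T_near] := (cvgrPdist_lt _ _).1 T_cvg (e / 2) (divr_gt0 e0 (ltr0Sn _ 1)).
exists N1 => m N hm hmN.
move: (T_near m hm) (T_near N (leq_trans hm hmN)) => /=.
by rewrite !ltr_distlC => /andP[? ?] /andP[? ?]; lra.
Qed.

Section NonnegProduct.
Variables (u v : nat -> R) (Mu Mv : R).
Hypotheses (u_ge0 : forall i, 0 <= u i) (v_ge0 : forall j, 0 <= v j).
Hypotheses (u_ub : forall N, \sum_(k < N) u k <= Mu) (v_ub : forall N, \sum_(k < N) v k <= Mv).

Lemma sum_square_enum_le N :
  \sum_(0 <= k < N) u (square_enum k).1 * v (square_enum k).2 <= Mu * Mv.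
Proof.
apply: (@le_trans _ _ (\sum_(0 <= k < N * N) u (square_enum k).1 * v (square_enum k).2)).
  rewrite (@big_cat_nat _ _ _ N 0 (N * N)) //= ?lerDl; last nia.
  by apply: sumr_ge0 => k _; apply: mulr_ge0.
rewrite sum_square_enumM !big_mkord.
by apply: ler_pM; rewrite ?sumr_ge0.
Qed.

Lemma square_enum_tail e : 0 < e -> exists N1, forall m N, (N1 <= m)%N -> (m <= N)%N ->
  \sum_(m <= k < N) u (square_enum k).1 * v (square_enum k).2 < e.
Proof.
move=> e0; pose T N := \sum_(0 <= k < N) u (square_enum k).1 * v (square_enum k).2.
have T_sub m N : (m <= N)%N ->
    T N - T m = \sum_(m <= k < N) u (square_enum k).1 * v (square_enum k).2.
  by move=> hmN; rewrite /T (@big_cat_nat _ _ _ m 0 N) //= addrAC subrr add0r.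
have T_nd : {homo T : m N / (m <= N)%N >-> m <= N}.
  move=> m N hmN; rewrite -subr_ge0 T_sub //.
  by apply: sumr_ge0 => k _; apply: mulr_ge0.
have [N1 T_cauchy] := nondecreasing_bounded_cauchy T_nd sum_square_enum_le e0.
by exists N1 => m N hm hmN; rewrite -T_sub //; exact: T_cauchy.
Qed.

End NonnegProduct.

Lemma cabs_mulB A B A' B' :
  cabs (A * B - A' * B') <= cabs (A - A') * cabs B + cabs A' * cabs (B - B').
Proof.
have -> : A * B - A' * B' = (A - A') * B + A' * (B - B') by ring.
by rewrite -!cabsM cabsD.
Qed.

(* The partial sum up to Q^2 is the product of the partial sums up to Q; the rest
   is a tail of the absolutely convergent double series. *)
Lemma series_to_square_mul a b A B (Ma Mb : R) :
  (forall N, \sum_(k < N) cabs (a k) <= Ma) ->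
  (forall N, \sum_(k < N) cabs (b k) <= Mb) ->
  series_to a A -> series_to b B ->
  series_to (fun k => a (square_enum k).1 * b (square_enum k).2) (A * B).
Proof.
move=> a_ub b_ub aA bB e e0.
have Ma_ge0 : 0 <= Ma by have := a_ub 0%N; rewrite big_ord0.
have e2 : 0 < e / 2 by rewrite divr_gt0.
have e4 : 0 < e / 4 by rewrite divr_gt0.
have [N1 tail_small] :=
  square_enum_tail (fun i => cabs_ge0 (a i)) (fun j => cabs_ge0 (b j)) a_ub b_ub e2.
have B1_gt0 : 0 < cabs B + 1 by have := cabs_ge0 B; lra.
have [Na Na_ok] := aA _ (divr_gt0 e4 B1_gt0).
have [Nb Nb_ok] := bB _ (divr_gt0 e4 (ltr_pwDr ltr01 Ma_ge0)).
pose M := maxn (maxn Na Nb) N1.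
exists (M * M)%N => N hN.
pose Q := Nat.sqrt N.
have [sqrt_lo sqrt_hi] := PeanoNat.Nat.sqrt_spec' N.
have hQQ : (Q * Q <= N)%N by rewrite /Q; lia.
have hMQ : (M <= Q)%N by rewrite /Q; move: sqrt_lo sqrt_hi; set q := Nat.sqrt N; nia.
pose SA := \sum_(k < Q) a k; pose SB := \sum_(k < Q) b k.
have head_close : cabs (A * B - SA * SB) < e / 2.
  have eA : cabs (A - SA) < e / 4 / (cabs B + 1) by apply: Na_ok; lia.
  have eB : cabs (B - SB) < e / 4 / (Ma + 1) by apply: Nb_ok; lia.
  have SA_ub : cabs SA <= Ma by exact: le_trans (cabs_sum _ _) (a_ub Q).
  apply: le_lt_trans (cabs_mulB _ _ _ _) _.
  move: eA eB; rewrite !ltr_pdivlMr ?(ltr_pwDr ltr01 Ma_ge0) // => eA eB.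
  have := cabs_ge0 (A - SA); have := cabs_ge0 B; have := cabs_ge0 SA.
  have := cabs_ge0 (B - SB); nra.
have tail_close :
    cabs (\sum_(Q * Q <= k < N) a (square_enum k).1 * b (square_enum k).2) < e / 2.
  apply: le_lt_trans (cabs_sum _ _) _; under eq_bigr do rewrite cabsM.
  by apply: tail_small => //; nia.
rewrite -(big_mkord xpredT (fun k => a (square_enum k).1 * b (square_enum k).2)).
rewrite (@big_cat_nat _ _ _ (Q * Q) 0 N) //= sum_square_enumM !big_mkord.
rewrite -/SA -/SB opprD addrA; apply: le_lt_trans (cabsD _ _) _; rewrite cabsN.
by have := ltrD head_close tail_close; rewrite -splitr.
Qed.

End SeriesProduct.

Section ExpansionProduct.
Variables (R : realType) (n : nat).
Local Notation C := R[i].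
Local Notation CV := (CV R n).

Lemma series_to_mull (c : C) a A : series_to a A -> series_to (fun k => c * a k) (c * A).
Proof.
move=> aA e e0; have c1_gt0 : 0 < cabs c + 1 by have := cabs_ge0 c; lra.
have [N0 N0_ok] := aA _ (divr_gt0 e0 c1_gt0); exists N0 => N hN.
rewrite -mulr_sumr -mulrBr cabsM.
have := N0_ok N hN; rewrite ltr_pdivlMr // => close.
have := cabs_ge0 c; have := cabs_ge0 (A - \sum_(k < N) a k); nra.
Qed.

Definition normally_bounded (t : nat -> CV -> C) (K : set CV) : Prop :=
  exists M : nat -> R, (forall k p, K p -> cabs (t k p) <= M k) /\
    exists Mb : R, forall N, \sum_(k < N) M k <= Mb.

Lemma normally_bounded_abs_sum t K p :
  normally_bounded t K -> K p -> exists Mb, forall N, \sum_(k < N) cabs (t k p) <= Mb.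
Proof.
move=> [M [t_ub [Mb M_ub]]] Kp; exists Mb => N.
by apply: le_trans (M_ub N); apply: ler_sum => k _; exact: t_ub.
Qed.

Lemma normally_bounded_square_mul (t1 t2 : nat -> CV -> C) (xi : C) K :
  cabs xi = 1 -> normally_bounded t1 K -> normally_bounded t2 K ->
  normally_bounded (fun k p => xi * (t1 (square_enum k).1 p * t2 (square_enum k).2 p)) K.
Proof.
move=> xi1 [M1 [t1_ub [B1 M1_ub]]] [M2 [t2_ub [B2 M2_ub]]].
have [[p0 Kp0]|K0] := pselect (exists p, K p); last first.
  exists (fun=> 0); split; first by move=> k p Kp; case: K0; exists p.
  by exists 0 => N; rewrite big1.
have M1_ge0 i : 0 <= M1 i by apply: le_trans (t1_ub i p0 Kp0); exact: cabs_ge0.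
have M2_ge0 j : 0 <= M2 j by apply: le_trans (t2_ub j p0 Kp0); exact: cabs_ge0.
exists (fun k => M1 (square_enum k).1 * M2 (square_enum k).2); split.
  move=> k p Kp; rewrite !cabsM xi1 mul1r.
  by apply: ler_pM; rewrite ?cabs_ge0 ?t1_ub ?t2_ub.
exists (B1 * B2) => N.
by have := sum_square_enum_le M1_ge0 M2_ge0 M1_ub M2_ub N; rewrite big_mkord.
Qed.

(* The product of q^n1 e(B1(t1, z)) and q^n2 e(B2(t2, z)) is q^(n1+n2) e(B(mix t1 t2, z)). *)
Lemma has_expansion_mul (S1 S2 S : 'M[R]_n) (F1 F2 F : CV -> C)
    (P1 P2 P : R -> 'rV[R]_n -> Prop) (xi : C)
    (mix : 'rV[R]_n -> 'rV[R]_n -> 'rV[R]_n) :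
  (forall t1 t2 z, BilC S (cv (mix t1 t2)) z = BilC S1 (cv t1) z + BilC S2 (cv t2) z) ->
  (forall n1 t1 n2 t2, P1 n1 t1 -> P2 n2 t2 -> P (n1 + n2) (mix t1 t2)) ->
  cabs xi = 1 -> (forall p, Hdom p -> F p = xi * (F1 p * F2 p)) ->
  has_expansion S1 F1 P1 -> has_expansion S2 F2 P2 -> has_expansion S F P.
Proof.
move=> mixB mixP xi1 FE [c1 [nn1 [tt1 [c1P bnd1 sum1]]]] [c2 [nn2 [tt2 [c2P bnd2 sum2]]]].
pose t1 k (p : CV) := c1 k * ee (toC (nn1 k) * p.1 + BilC S1 (cv (tt1 k)) p.2).
pose t2 k (p : CV) := c2 k * ee (toC (nn2 k) * p.1 + BilC S2 (cv (tt2 k)) p.2).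
pose i k := (square_enum k).1; pose j k := (square_enum k).2.
exists (fun k => xi * (c1 (i k) * c2 (j k))), (fun k => nn1 (i k) + nn2 (j k)),
  (fun k => mix (tt1 (i k)) (tt2 (j k))).
have termE k (p : CV) : xi * (c1 (i k) * c2 (j k)) *
    ee (toC (nn1 (i k) + nn2 (j k)) * p.1 + BilC S (cv (mix (tt1 (i k)) (tt2 (j k)))) p.2)
    = xi * (t1 (i k) p * t2 (j k) p).
  rewrite /t1 /t2 mixB toCE rmorphD.
  rewrite -mulrA; congr (_ * _); rewrite [RHS]mulrACA -eeD; congr (_ * ee _); ring.
split.
- move=> k /=; rewrite !mulf_eq0 !negb_or => /and3P[_ /c1P ? /c2P ?]; exact: mixP.
- move=> K cK HK.
  have [M [t_ub M_ub]] := normally_bounded_square_mul xi1 (bnd1 K cK HK) (bnd2 K cK HK).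
  by exists M; split=> // k p Kp; rewrite termE; exact: t_ub.
- move=> p hp.
  have p_cpt : compact [set p] by exact: compact_set1.
  have p_H q : [set p] q -> Hdom q by move=> ->.
  have [B1 t1_ub] := normally_bounded_abs_sum (bnd1 _ p_cpt p_H) (erefl : [set p] p).
  have [B2 t2_ub] := normally_bounded_abs_sum (bnd2 _ p_cpt p_H) (erefl : [set p] p).
  have := series_to_mull xi
    (series_to_square_mul (a := t1^~ p) (b := t2^~ p) t1_ub t2_ub (sum1 p hp) (sum2 p hp)).
  rewrite FE // => prod_sum e e0; have [N0 N0_ok] := prod_sum e e0.
  by exists N0 => N hN; under eq_bigr do rewrite termE; exact: N0_ok.
Qed.

End ExpansionProduct.

Section BilinearForms.
Variables (R : realType) (n : nat).
Implicit Types (S : 'M[R]_n) (u v w t : 'rV[R]_n) (z y : 'rV[R[i]]_n).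

Lemma BilD S1 S2 v w : Bil (S1 + S2) v w = Bil S1 v w + Bil S2 v w.
Proof. by rewrite /Bil mulmxDr mulmxDl mxE. Qed.

Lemma BilCD S1 S2 z y : BilC (S1 + S2) z y = BilC S1 z y + BilC S2 z y.
Proof. by rewrite /BilC toCE map_mxD mulmxDr mulmxDl mxE. Qed.

Lemma QCD S1 S2 z : QC (S1 + S2) z = QC S1 z + QC S2 z.
Proof. by rewrite /QC BilCD mulrDl. Qed.

Lemma BilBl S u v w : Bil S (u - v) w = Bil S u w - Bil S v w.
Proof. by rewrite /Bil !mulmxBl !mxE. Qed.

Lemma BilBr S u v w : Bil S u (v - w) = Bil S u v - Bil S u w.
Proof. by rewrite /Bil linearB /= mulmxBr !mxE. Qed.

Lemma Bil0l S v : Bil S 0 v = 0.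
Proof. by rewrite /Bil !mul0mx mxE. Qed.

Lemma Bil0r S v : Bil S v 0 = 0.
Proof. by rewrite /Bil trmx0 mulmx0 mxE. Qed.

Lemma Bil_sym S v w : S^T = S -> Bil S v w = Bil S w v.
Proof.
move=> S_sym; rewrite /Bil.
have -> : (v *m S *m w^T) 0 0 = ((v *m S *m w^T)^T) 0 0 by rewrite [RHS]mxE.
by rewrite !trmx_mul S_sym trmxK mulmxA.
Qed.

Lemma BilC_cv S t z : BilC S (cv t) z = (cv (t *m S) *m z^T) 0 0.
Proof. by rewrite /BilC /cv toCE map_mxM. Qed.

Lemma sym_posdef_ge0 S v : sym_posdef S -> 0 <= Bil S v v.
Proof.
case=> _ S_pos; have [->|v_neq0] := eqVneq v 0; first by rewrite Bil0l.
exact/ltW/S_pos.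
Qed.

Lemma sym_posdefD S1 S2 : sym_posdef S1 -> sym_posdef S2 -> sym_posdef (S1 + S2).
Proof.
move=> [S1_sym S1_pos] [S2_sym S2_pos]; split; first by rewrite linearD /= S1_sym S2_sym.
by move=> v v_neq0; rewrite BilD addr_gt0 ?S1_pos ?S2_pos.
Qed.

Lemma sym_posdef_unit S : sym_posdef S -> S \in unitmx.
Proof.
move=> [_ S_pos]; rewrite -row_free_unit -kermx_eq0; apply/eqP/row_matrixP => i.
rewrite row0; apply/eqP/negP => /negP /S_pos.
by rewrite /Bil -row_mul mulmx_ker row0 mul0mx mxE ltxx.
Qed.

Definition mix_exponent (S1 S2 : 'M[R]_n) t1 t2 := (t1 *m S1 + t2 *m S2) *m invmx (S1 + S2).

Lemma mix_exponentK S1 S2 t1 t2 : S1 + S2 \in unitmx ->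
  mix_exponent S1 S2 t1 t2 *m (S1 + S2) = t1 *m S1 + t2 *m S2.
Proof. by move=> S_unit; rewrite /mix_exponent -mulmxA mulVmx ?mulmx1. Qed.

Lemma BilC_mix_exponent S1 S2 t1 t2 z : S1 + S2 \in unitmx ->
  BilC (S1 + S2) (cv (mix_exponent S1 S2 t1 t2)) z = BilC S1 (cv t1) z + BilC S2 (cv t2) z.
Proof.
by move=> S_unit; rewrite !BilC_cv mix_exponentK // /cv toCE map_mxD mulmxDl mxE.
Qed.

(* Q1(t1) + Q2(t2) - Q(t) = Q1(t1 - t) + Q2(t2 - t) >= 0. *)
Lemma Qr_mix_exponent S1 S2 t1 t2 : sym_posdef S1 -> sym_posdef S2 ->
  Qr (S1 + S2) (mix_exponent S1 S2 t1 t2) <= Qr S1 t1 + Qr S2 t2.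
Proof.
move=> S1_pd S2_pd; have S_unit := sym_posdef_unit (sym_posdefD S1_pd S2_pd).
set t := mix_exponent S1 S2 t1 t2.
have Bt : Bil S1 t1 t + Bil S2 t2 t = Bil (S1 + S2) t t.
  by rewrite /Bil /t mix_exponentK // mulmxDl [RHS]mxE.
have := sym_posdef_ge0 (t1 - t) S1_pd; have := sym_posdef_ge0 (t2 - t) S2_pd.
rewrite !BilBl !BilBr (Bil_sym t t1 S1_pd.1) (Bil_sym t t2 S2_pd.1).
by have := BilD S1 S2 t t; rewrite /Qr; lra.
Qed.

End BilinearForms.

Lemma det_mx22 (T : comPzRingType) (g : 'M[T]_2) :
  \det g = g i0 i0 * g i1 i1 - g i0 i1 * g i1 i0.
Proof.
rewrite (expand_det_row _ i0) !big_ord_recl big_ord0 addr0 /cofactor !det_mx11 !mxE /=.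
rewrite !expr0 expr1 mul1r mulN1r mulrN.
by congr (g _ _ * g _ _ - g _ _ * g _ _); apply: val_inj.
Qed.

Section Metaplectic.
Variable R : realType.
Local Notation C := R[i].
Implicit Types (g : 'M[int]_2) (z t e : C).

Lemma jfactor_neq0 g t : inSL2 g -> 0 < cim t -> (mc g)%:~R * t + (md g)%:~R != 0.
Proof.
case: t => x y g_SL /= y_gt0; rewrite -!(rmorph_int (real_complex R)) /=; simpc.
apply/eqP => -[re0 im0].
have c0 : mc g = 0.
  by move/eqP: im0; rewrite mulf_eq0 (gt_eqF y_gt0) orbF intr_eq0 => /eqP.
have d0 : md g = 0 by move/eqP: re0; rewrite c0 mul0r add0r intr_eq0 => /eqP.
by move: g_SL; rewrite /inSL2 det_mx22 -/(mc g) -/(md g) c0 d0 !mulr0 subrr.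
Qed.

Lemma psqrt_neq0 z : z != 0 -> psqrt z != 0.
Proof.
move=> z_neq0; apply/eqP => -[re0 im0].
have sgn_neq0 : (if cim z < 0 then -1 else 1) != 0 :> R.
  by case: ifP; rewrite ?oppr_eq0 oner_eq0.
move/eqP: re0; rewrite sqrtr_eq0 => re_le0.
move/eqP: im0; rewrite mulf_eq0 (negbTE sgn_neq0) sqrtr_eq0 /= => im_le0.
have : cabs z == 0 by rewrite eq_le cabs_ge0 andbT; lra.
by rewrite cabs_eq0 (negbTE z_neq0).
Qed.

Lemma pm11 : pm1 (1 : C).
Proof. by left. Qed.

Lemma pm1_neq0 e : pm1 e -> e != 0.
Proof. by case=> ->; rewrite ?oppr_eq0 oner_eq0. Qed.

Lemma pm1_sqr e : pm1 e -> e * e = 1.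
Proof. by case=> ->; rewrite ?mulrNN mulr1. Qed.

Lemma mpf_neq0 g e t : inSL2 g -> pm1 e -> 0 < cim t -> mpf g e t != 0.
Proof.
by move=> g_SL e_pm1 t_H; rewrite /mpf mulf_neq0 ?(pm1_neq0 e_pm1) ?psqrt_neq0 ?jfactor_neq0.
Qed.

Lemma psqrt1 : psqrt 1 = 1 :> C.
Proof.
rewrite /psqrt (cabs_pm1 pm11) /cre /cim /= ltxx subrr mul0r sqrtr0 mulr0.
have -> : (1 + 1) / 2 = 1 :> R by field.
by rewrite sqrtr1.
Qed.

Lemma mob1 t : mob 1%:M t = t.
Proof. by rewrite /mob /ma /mb /mc /md !mxE /= mul1r addr0 mul0r add0r divr1. Qed.

Lemma mp_eps1r g e : inSL2 g -> mp_eps g e 1%:M 1 = e.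
Proof.
move=> g_SL; rewrite /mp_eps mob1 mulmx1 /mpf /mc /md !mxE /= mul0r add0r psqrt1.
rewrite !mul1r mulr1 mulfK // psqrt_neq0 // jfactor_neq0 //=; exact: ltr01.
Qed.

End Metaplectic.

Arguments pm11 {R}.

Section Lattice.
Variables (R : realType) (n : nat) (Bs : 'M[R]_n).
Implicit Types (v w : 'rV[R]_n).

Lemma inL0 : inL Bs 0.
Proof. by exists 0; rewrite map_mx0 mul0mx. Qed.

Lemma inLD v w : inL Bs v -> inL Bs w -> inL Bs (v + w).
Proof. by move=> [x ->] [y ->]; exists (x + y); rewrite map_mxD mulmxDl. Qed.

Lemma inLZ (a : int) v : inL Bs v -> inL Bs (a%:~R *: v).
Proof.
move=> [x ->]; exists (a *: x); rewrite scalemxAl; congr (_ *m _).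
by apply/matrixP => i j; rewrite !mxE intrM.
Qed.

Lemma inL_actv v w g : inL Bs v -> inL Bs w -> inL Bs (actv v w g).
Proof. by move=> Lv Lw; apply: inLD; apply: inLZ. Qed.

Lemma inL_actw v w g : inL Bs v -> inL Bs w -> inL Bs (actw v w g).
Proof. by move=> Lv Lw; apply: inLD; apply: inLZ. Qed.

End Lattice.

Section Signs.
Variable R : realType.
Local Notation C := R[i].

Lemma pm1_sign k : pm1 ((-1) ^+ k : C).
Proof. by rewrite -signr_odd; case: odd; [right | left]. Qed.

Lemma cexp_ipi : cexp (toC pi * ci R) = -1.
Proof.
rewrite /cexp /cre /cim /toC /= !(mulr0, mul0r, mulr1, subr0, addr0) expR0 cospi sinpi.
by simpc.
Qed.

Lemma cexp_ipi_nat k : cexp (toC pi * ci R * toC k%:R) = (-1) ^+ k.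
Proof.
elim: k => [|k IH]; first by rewrite toCE rmorph0 mulr0 cexp0.
move: IH; set ipi := toC pi * ci R => IH.
by rewrite -natr1 toCD mulrDr cexpD IH /toC mulr1 exprSr /ipi cexp_ipi.
Qed.

Lemma pm1_cexp_ipi_int (m : int) : pm1 (cexp (toC pi * ci R * toC m%:~R)).
Proof.
case: m => k; first by rewrite cexp_ipi_nat; exact: pm1_sign.
set w := toC pi * ci R * toC k.+1%:R.
have wN : toC pi * ci R * toC (Negz k)%:~R = - w by rewrite NegzE toCE rmorphN mulrN.
have : cexp w * cexp (- w) = 1 by rewrite -cexpD subrr cexp0.
rewrite wN => /mulr1_eq <-; rewrite cexp_ipi_nat invr_sign; exact: pm1_sign.
Qed.

End Signs.

Section HeisenbergCharacters.
Variables (R : realType) (n : nat) (Bs : 'M[R]_n) (G : 'M[int]_2 -> Prop).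
Hypothesis G_fi : fi_subgroup G.
Local Notation jelt := (jelt R n).
Implicit Types (S : 'M[R]_n) (x y : jelt) (chi : jelt -> R[i]).

Definition set_xi x (xi : R[i]) := JE (el_g x) (el_eps x) (el_v x) (el_w x) xi.

Definition heis_sign S x y : R[i] :=
  cexp (toC pi * ci R * toC (Bil S (actv (el_v x) (el_w x) (el_g y)) (el_w y)
                             - Bil S (el_v y) (actw (el_v x) (el_w x) (el_g y)))).

Lemma jmul_set_xi S x y xi1 xi2 :
  jmul S (set_xi x xi1) (set_xi y xi2) = set_xi (jmul S x y) (xi1 * xi2 * heis_sign S x y).
Proof. by []. Qed.

Lemma el_xi_jmul S x y : el_xi (jmul S x y) = el_xi x * el_xi y * heis_sign S x y.
Proof. by []. Qed.

Lemma chi_starE chi1 chi2 x :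
  chi_star chi1 chi2 x = el_xi x * chi1 (set_xi x 1) * chi2 (set_xi x 1).
Proof. by []. Qed.

Lemma heis_signD S1 S2 x y : heis_sign (S1 + S2) x y = heis_sign S1 x y * heis_sign S2 x y.
Proof. by rewrite /heis_sign -cexpD -mulrDr -toCD !BilD; congr (cexp (_ * toC _)); ring. Qed.

Lemma heis_sign_pm1 S x y : integral_on S Bs -> in_grp G Bs x -> in_grp G Bs y ->
  pm1 (heis_sign S x y).
Proof.
move=> S_int [_ _ Lv1 Lw1 _] [_ _ Lv2 Lw2 _]; rewrite /heis_sign.
have [m1 ->] := S_int _ _ (inL_actv (el_g y) Lv1 Lw1) Lw2.
have [m2 ->] := S_int _ _ Lv2 (inL_actw (el_g y) Lv1 Lw1).
by rewrite -intrB; exact: pm1_cexp_ipi_int.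
Qed.

Lemma in_grp_set_xi x xi : in_grp G Bs x -> pm1 xi -> in_grp G Bs (set_xi x xi).
Proof. by case. Qed.

Lemma in_grp_center xi : pm1 xi -> in_grp G Bs (JE 1%:M 1 0 0 xi).
Proof.
case: G_fi => _ G1 _ _ _ xi_pm1.
by split=> //; [split=> //; exact: det1 | exact: pm11 | exact: inL0 | exact: inL0].
Qed.

Lemma jmul_center S x xi : inSL2 (el_g x) ->
  jmul S x (JE 1%:M 1 0 0 xi) = set_xi x (el_xi x * xi).
Proof.
move=> x_SL; rewrite /jmul /actv /actw /ma /mb /mc /md !mxE /=.
rewrite mulmx1 mp_eps1r // !scale1r !scale0r !addr0 add0r Bil0l Bil0r subrr.
by rewrite (_ : toC 0 = 0) // mulr0 cexp0 mulr1.
Qed.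

Lemma lin_char_set_xi S chi x xi : is_lin_char S Bs G chi -> center_cond chi ->
  in_grp G Bs x -> pm1 xi -> chi (set_xi x xi) = chi (set_xi x 1) * xi.
Proof.
move=> [_ chiM] chi_center x_in xi_pm1.
have -> : set_xi x xi = jmul S (set_xi x 1) (JE 1%:M 1 0 0 xi).
  by rewrite jmul_center ?mul1r //; case: x_in => -[].
have x1_in := in_grp_set_xi x_in pm11; have c_in := in_grp_center xi_pm1.
by rewrite chiM ?chi_center.
Qed.

Lemma lin_char_jmul S chi x y : integral_on S Bs -> is_lin_char S Bs G chi ->
  center_cond chi -> in_grp G Bs x -> in_grp G Bs y ->
  chi (set_xi (jmul S x y) 1) = chi (set_xi x 1) * chi (set_xi y 1) * heis_sign S x y.
Proof.
move=> S_int chi_lin chi_center x_in y_in.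
have c_pm1 := heis_sign_pm1 S_int x_in y_in.
have -> : set_xi (jmul S x y) 1 = jmul S (set_xi x 1) (set_xi y (heis_sign S x y)).
  by rewrite jmul_set_xi mul1r pm1_sqr.
have x1_in := in_grp_set_xi x_in pm11; have yc_in := in_grp_set_xi y_in c_pm1.
by rewrite chi_lin.2 // (lin_char_set_xi chi_lin chi_center y_in c_pm1) mulrA.
Qed.

Lemma is_lin_char_star S1 S2 chi1 chi2 : integral_on S1 Bs -> integral_on S2 Bs ->
  is_lin_char S1 Bs G chi1 -> center_cond chi1 ->
  is_lin_char S2 Bs G chi2 -> center_cond chi2 ->
  is_lin_char (S1 + S2) Bs G (chi_star chi1 chi2).
Proof.
move=> S1_int S2_int chi1_lin chi1_center chi2_lin chi2_center; split.
  move=> x x_in; have x1_in : in_grp G Bs (set_xi x 1) by apply: in_grp_set_xi x_in pm11.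
  by rewrite chi_starE !mulf_neq0 ?chi1_lin.1 ?chi2_lin.1 ?pm1_neq0 //; case: x_in.
move=> x y x_in y_in; rewrite !chi_starE el_xi_jmul heis_signD.
rewrite (lin_char_jmul S1_int chi1_lin chi1_center x_in y_in).
rewrite (lin_char_jmul S2_int chi2_lin chi2_center x_in y_in).
have c1_sqr := pm1_sqr (heis_sign_pm1 S1_int x_in y_in).
have c2_sqr := pm1_sqr (heis_sign_pm1 S2_int x_in y_in).
set c1 := heis_sign S1 x y in c1_sqr *; set c2 := heis_sign S2 x y in c2_sqr *.
set a1 := chi1 _; set b1 := chi1 _; set a2 := chi2 _; set b2 := chi2 _.
have -> : el_xi x * el_xi y * (c1 * c2) * (a1 * b1 * c1) * (a2 * b2 * c2) =
  el_xi x * a1 * a2 * (el_xi y * b1 * b2) * (c1 * c1) * (c2 * c2) by ring.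
by rewrite c1_sqr c2_sqr !mulr1.
Qed.

End HeisenbergCharacters.

Section JacobiProduct.
Variables (R : realType) (n : nat) (m1 m2 : int) (S1 S2 Bs : 'M[R]_n).
Variables (f1 f2 : CV R n -> R[i]).
Local Notation f12 := (fun p => f1 p * f2 p).

Lemma holo_mul : holo f1 -> holo f2 -> holo f12.
Proof.
by move=> f1_holo f2_holo p p_H; exact: differentiableM (f1_holo p p_H) (f2_holo p p_H).
Qed.

Lemma slash_mul x p : inSL2 (el_g x) -> pm1 (el_eps x) -> Hdom p ->
  slash (m1 + m2) (S1 + S2) f12 x p =
  el_xi x * (slash m1 S1 f1 (set_xi x 1) p * slash m2 S2 f2 (set_xi x 1) p).
Proof.
case: x => g e v w xi /= g_SL e_pm1 p_H; rewrite /slash /=.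
have mpf_unit : mpf g e p.1 \is a GRing.unit by rewrite unitfE mpf_neq0.
have split_arg (c j t a1 a2 b1 b2 d1 d2 e1 e2 : R[i]) :
    - (c * (a1 + a2) / j) + t * (b1 + b2) + (d1 + d2) + (e1 + e2) / 2 =
    (- (c * a1 / j) + t * b1 + d1 + e1 / 2) + (- (c * a2 / j) + t * b2 + d2 + e2 / 2).
  by rewrite !mulrDr !mulrDl; ring.
rewrite opprD exprzDr // !QCD !BilCD split_arg eeD.
(* Abstracting the atoms keeps ring from unfolding them. *)
set M := mpf _ _ _; set E1 := ee _; set E2 := ee _; set F1 := f1 _; set F2 := f2 _.
ring.
Qed.

Lemma slash_mul_invariant (G : 'M[int]_2 -> Prop) (chi1 chi2 : jelt R n -> R[i]) :
  (forall x, in_grp G Bs x -> forall p, Hdom p -> slash m1 S1 f1 x p = chi1 x * f1 p) ->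
  (forall x, in_grp G Bs x -> forall p, Hdom p -> slash m2 S2 f2 x p = chi2 x * f2 p) ->
  forall x, in_grp G Bs x -> forall p, Hdom p ->
    slash (m1 + m2) (S1 + S2) f12 x p = chi_star chi1 chi2 x * f12 p.
Proof.
move=> f1_inv f2_inv x x_in p p_H; have x1_in := in_grp_set_xi x_in pm11.
case: x_in => -[_ g_SL] e_pm1 _ _ _.
by rewrite slash_mul // f1_inv // f2_inv // chi_starE; ring.
Qed.

Lemma slash_mul_expansion (P1 P2 P : R -> 'rV[R]_n -> Prop) :
  S1 + S2 \in unitmx ->
  (forall n1 t1 n2 t2, P1 n1 t1 -> P2 n2 t2 -> P (n1 + n2) (mix_exponent S1 S2 t1 t2)) ->
  (forall x, in_grp inSL2 Bs x -> has_expansion S1 (slash m1 S1 f1 x) P1) ->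
  (forall x, in_grp inSL2 Bs x -> has_expansion S2 (slash m2 S2 f2 x) P2) ->
  forall x, in_grp inSL2 Bs x -> has_expansion (S1 + S2) (slash (m1 + m2) (S1 + S2) f12 x) P.
Proof.
move=> S_unit mixP f1_exp f2_exp x x_in; have x1_in := in_grp_set_xi x_in pm11.
case: x_in => -[_ g_SL] e_pm1 _ _ xi_pm1.
apply: (has_expansion_mul _ mixP (cabs_pm1 xi_pm1) _ (f1_exp _ x1_in) (f2_exp _ x1_in)).
  by move=> t1 t2 z; exact: BilC_mix_exponent.
by move=> p p_H; exact: slash_mul.
Qed.

End JacobiProduct.

Theorem proposition2p12 (R : realType) (n : nat) (m1 m2 : int)
    (S1 S2 Bs : 'M[R]_n) (G : 'M[int]_2 -> Prop)
    (chi1 chi2 : jelt R n -> R[i]) (f1 f2 : CV R n -> R[i]) :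
  Bs \in unitmx ->
  sym_posdef S1 -> sym_posdef S2 ->
  integral_on S1 Bs -> integral_on S2 Bs ->
  fi_subgroup G ->
  is_lin_char S1 Bs G chi1 -> fi_kernel S1 Bs G chi1 -> center_cond chi1 ->
  is_lin_char S2 Bs G chi2 -> fi_kernel S2 Bs G chi2 -> center_cond chi2 ->
  is_lin_char (S1 + S2) Bs G (chi_star chi1 chi2) /\
  (jacobi_form m1 S1 Bs G chi1 f1 -> jacobi_form m2 S2 Bs G chi2 f2 ->
     jacobi_form (m1 + m2) (S1 + S2) Bs G (chi_star chi1 chi2) (fun p => f1 p * f2 p) /\
     (jacobi_cusp_form m1 S1 Bs G chi1 f1 \/ jacobi_cusp_form m2 S2 Bs G chi2 f2 ->
      jacobi_cusp_form (m1 + m2) (S1 + S2) Bs G (chi_star chi1 chi2)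
        (fun p => f1 p * f2 p))).
Proof.
move=> _ S1_pd S2_pd S1_int S2_int G_fi chi1_lin _ chi1_c chi2_lin _ chi2_c.
split; first exact: is_lin_char_star.
have S_unit := sym_posdef_unit (sym_posdefD S1_pd S2_pd).
have Q_mix t1 t2 := Qr_mix_exponent t1 t2 S1_pd S2_pd.
move=> [f1_holo f1_inv f1_exp] [f2_holo f2_inv f2_exp].
have f_holo := holo_mul f1_holo f2_holo.
have f_inv := slash_mul_invariant f1_inv f2_inv.
split.
  split; [exact: f_holo | exact: f_inv |].
  by apply: slash_mul_expansion f1_exp f2_exp => // n1 t1 n2 t2 ? ?; have := Q_mix t1 t2; lra.
case=> [[_ _ f1_cusp] | [_ _ f2_cusp]]; (split; [exact: f_holo | exact: f_inv |]).
  by apply: slash_mul_expansion f1_cusp f2_exp => // n1 t1 n2 t2 ? ?; have := Q_mix t1 t2; lra.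
by apply: slash_mul_expansion f1_exp f2_cusp => // n1 t1 n2 t2 ? ?; have := Q_mix t1 t2; lra.
Qed.
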